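(* Let $\Lambda=E_8(-1)^{\oplus 2}\oplus H^{\oplus 3}$ be the K3 lattice, with bilinear form $(\ ,\ )$ extended $\mathbb{C}$-bilinearly to $\Lambda_{\mathbb{C}}=\Lambda\otimes\mathbb{C}$. Let $\varphi_{14}(x)=x^{14}-x^{11}-x^{10}+x^7-x^4-x^3+1$ and let $\delta$ be the root of $\varphi_{14}$ with $\delta\approx -0.9903988352300419-0.13823945592693967\,i$. Then there exist an automorphism $F$ of the lattice $\Lambda$ and an element $\sigma\in\Lambda_{\mathbb{C}}$ such that: (1) the characteristic polynomial of $F$ is $(x-1)^8\varphi_{14}(x)$; (2) $(\sigma,\sigma)=0$ and $(\sigma,\overline{\sigma})>0$; (3) $F(\sigma)=\delta\sigma$ (where $F$ also denotes its $\mathbb{C}$-linear extension).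
   Context: $H$ denotes the even unimodular lattice of signature $(1,1)$ and $E_8(-1)$ the even unimodular negative definite lattice of rank $8$. $\varphi_{14}$ is an irreducible reciprocal (Salem) polynomial; besides its real roots $\alpha_{14}=1.200026\ldots$ and $1/\alpha_{14}$ it has $12$ roots on the unit circle, and $\delta$ is the particular one specified by its approximate value. *)

From HB Require Import structures.
From mathcomp Require Import all_boot all_order all_algebra.
Set Implicit Arguments. Unset Strict Implicit. Unset Printing Implicit Defensive.
Import Order.TTheory GRing.Theory Num.Theory.
Local Open Scope ring_scope.

(* Gram matrix of E8(-1): minus the Cartan matrix of E8.
   Dynkin diagram (0-indexed): chain 0-2-3-4-5-6-7, and 1 attached to 3. *)
Definition e8_adj (i j : nat) : bool :=
  [|| (i == 0) && (j == 2), (i == 2) && (j == 3), (i == 3) && (j == 4),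
      (i == 4) && (j == 5), (i == 5) && (j == 6), (i == 6) && (j == 7)
    | (i == 1) && (j == 3)]%N.

Definition e8m (i j : nat) : int :=
  if i == j then -2 else if e8_adj i j || e8_adj j i then 1 else 0.

Definition hyp (i j : nat) : int := if i == j then 0 else 1.

(* K3 lattice Lambda = E8(-1) + E8(-1) + H + H + H on Z^22:
   coordinates 0..7, 8..15 : the two E8(-1); 16-17, 18-19, 20-21 : the three H. *)
Definition k3gram_nat (i j : nat) : int :=
  if (i < 8)%N && (j < 8)%N then e8m i j
  else if (8 <= i < 16)%N && (8 <= j < 16)%N then e8m (i - 8) (j - 8)
  else if (16 <= i)%N && (16 <= j)%N && ((i - 16) %/ 2 == (j - 16) %/ 2)%N
       then hyp ((i - 16) %% 2) ((j - 16) %% 2)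
  else 0.

Definition K3gram : 'M[int]_22 := \matrix_(i < 22, j < 22) k3gram_nat i j.

Definition k3formC (C : numClosedFieldType) (x y : 'cV[C]_22) : C :=
  (x^T *m map_mx (fun z : int => z%:~R) K3gram *m y) 0 0.

Definition phi14 : {poly int} :=
  'X^14 - 'X^11 - 'X^10 + 'X^7 - 'X^4 - 'X^3 + 1.

Definition lattice_aut (F : 'M[int]_22) : Prop :=
  F \in unitmx /\ F^T *m K3gram *m F = K3gram.

From HB Require Import structures.
From mathcomp Require Import all_boot all_order all_algebra.
From Stdlib Require Import ZArith Lia.
From mathcomp Require Import ssrZ ring.
Import Order.TTheory GRing.Theory Num.Theory.
Local Open Scope ring_scope.

(* F is the identity on the first E8(-1) and, on the complementary summand E8(-1) + H^3, an
   integral isometry F14 which is conjugate over Z to the companion matrix of phi14; all of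
   this is a finite integer matrix computation.  The eigenvector is sigma = s(delta) for a
   vector s of integer polynomials of degree 13 with F s = x s + m phi14.  As F is an isometry
   and delta^2 <> 1, (sigma, sigma) = 0.  Next, delta lies on the unit circle: conj(delta)
   and 1/delta are roots of the reciprocal polynomial phi14 close to conj(c), where
   c = (-99 - 14i)/100, and a divided-difference estimate shows that phi14 has a single root
   there.  Hence delta^13 (sigma, conj(sigma)) is the palindromic polynomial x^13 R(x + 1/x)
   at x = delta, and R(t) > 0 at t = delta + 1/delta ~ -1.98 because R has positive
   Bernstein coefficients on [-1.985, -1.975]. *)

(** * Integer matrices as lists *)

Lemma sum_ord_foldr {V : nmodType} n (f : nat -> V) :
  \sum_(k < n) f k = foldr (fun k acc => f k + acc) 0 (iota 0 n).
Proof.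
rewrite -(big_mkord xpredT) /index_iota subn0.
by elim: (iota 0 n) => [|a s IH]; rewrite ?big_nil ?big_cons ?IH.
Qed.

Lemma all_iota2P (m n : nat) (P : nat -> nat -> bool) :
  all (fun i => all (P i) (iota 0 n)) (iota 0 m) -> forall (i : 'I_m) (j : 'I_n), P i j.
Proof.
move=> /allP all_i i j.
have i_in : (i : nat) \in iota 0 m by rewrite mem_iota ltn_ord.
have j_in : (j : nat) \in iota 0 n by rewrite mem_iota ltn_ord.
exact: (allP (all_i _ i_in) _ j_in).
Qed.

Section SeqMatrix.
Context {R : pzRingType}.
Implicit Types a b : seq (seq R).

Definition seqmx_entry a i j : R := nth 0 (nth [::] a i) j.

Definition seqmx_of_fun n (f : nat -> nat -> R) : seq (seq R) :=
  mkseq (fun i => mkseq (f i) n) n.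

Definition mx_of_seqmx n a : 'M[R]_n := \matrix_(i, j) seqmx_entry a i j.

Definition seqmx_mul n a b := seqmx_of_fun n (fun i j =>
  foldr (fun k acc => seqmx_entry a i k * seqmx_entry b k j + acc) 0 (iota 0 n)).
Definition seqmx_tr n a := seqmx_of_fun n (fun i j => seqmx_entry a j i).
Definition seqmx_id n := seqmx_of_fun n (fun i j => (i == j)%:R).
Definition seqmx_companion n (p : seq R) := seqmx_of_fun n (fun i j =>
  if i == n.-1 then - nth 0 p j else (i.+1 == j)%:R).
Definition seqmx_block n1 n2 a b := seqmx_of_fun (n1 + n2) (fun i j =>
  if (i < n1)%nat then (if (j < n1)%nat then seqmx_entry a i j else 0)
  else if (j < n1)%nat then 0 else seqmx_entry b (i - n1) (j - n1)).
Definition seqmx_eqb n a b :=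
  all (fun i => all (fun j => seqmx_entry a i j == seqmx_entry b i j) (iota 0 n)) (iota 0 n).

Lemma seqmx_entry_of_fun n f i j : (i < n)%nat -> (j < n)%nat ->
  seqmx_entry (seqmx_of_fun n f) i j = f i j.
Proof. by move=> ltin ltjn; rewrite /seqmx_entry nth_mkseq // nth_mkseq. Qed.

Lemma mx_of_seqmx_of_fun n f : mx_of_seqmx n (seqmx_of_fun n f) = \matrix_(i, j) f i j.
Proof. by apply/matrixP => i j; rewrite !mxE seqmx_entry_of_fun. Qed.

Lemma mx_of_seqmx_mul n a b : mx_of_seqmx n a *m mx_of_seqmx n b = mx_of_seqmx n (seqmx_mul n a b).
Proof.
rewrite mx_of_seqmx_of_fun; apply/matrixP => i j; rewrite !mxE -sum_ord_foldr.
by apply: eq_bigr => k _; rewrite !mxE.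
Qed.

Lemma mx_of_seqmx_tr n a : (mx_of_seqmx n a)^T = mx_of_seqmx n (seqmx_tr n a).
Proof. by rewrite mx_of_seqmx_of_fun; apply/matrixP => i j; rewrite !mxE. Qed.

Lemma mx_of_seqmx_id n : mx_of_seqmx n (seqmx_id n) = 1%:M.
Proof. by rewrite mx_of_seqmx_of_fun; apply/matrixP => i j; rewrite !mxE. Qed.

Lemma mx_of_seqmx_block n1 n2 a b :
  mx_of_seqmx (n1 + n2) (seqmx_block n1 n2 a b)
  = block_mx (mx_of_seqmx n1 a) 0 0 (mx_of_seqmx n2 b).
Proof.
rewrite mx_of_seqmx_of_fun; apply/matrixP => i j.
case: (split_ordP i) => {}i ->; case: (split_ordP j) => {}j ->;
  rewrite ?block_mxEul ?block_mxEur ?block_mxEdl ?block_mxEdr !mxE /= ?ltn_ord //;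
  by rewrite !ltnNge !leq_addr //= !(addKn, add0n).
Qed.

Lemma mx_of_seqmx_eq n a b : seqmx_eqb n a b -> mx_of_seqmx n a = mx_of_seqmx n b.
Proof. by move=> /all_iota2P eq_ab; apply/matrixP => i j; rewrite !mxE (eqP (eq_ab i j)). Qed.

End SeqMatrix.

(** * Characteristic polynomials *)

Section CharPoly.
Context {R : comNzRingType}.

Lemma char_poly_block_diag m n (A : 'M[R]_m) (B : 'M[R]_n) :
  char_poly (block_mx A 0 0 B) = char_poly A * char_poly B.
Proof. by rewrite /char_poly char_block_diag_mx det_ublock. Qed.

Lemma char_poly_scalar1 n : char_poly (1%:M : 'M[R]_n) = ('X - 1) ^+ n.
Proof.
rewrite char_poly_trig ?scalar_mx_is_trig //.
under eq_bigr => i _ do rewrite mxE eqxx /= polyC1.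
by rewrite prodr_const card_ord.
Qed.

Lemma char_poly_tr n (A : 'M[R]_n) : char_poly A^T = char_poly A.
Proof.
rewrite /char_poly /char_poly_mx -[RHS]det_tr; congr (\det _).
by rewrite linearB /= tr_scalar_mx map_trmx.
Qed.

Lemma char_poly_conj n (A P Q : 'M[R]_n) :
  P *m Q = 1%:M -> char_poly (Q *m A *m P) = char_poly A.
Proof.
move=> PQ; have QP := mulmx1C PQ.
rewrite /char_poly /char_poly_mx.
have X_conj : ('X%:M : 'M[{poly R}]_n) = map_mx polyC Q *m 'X%:M *m map_mx polyC P.
  by rewrite scalar_mxC -mulmxA -map_mxM QP map_mx1 mulmx1.
rewrite [in LHS]X_conj !map_mxM -mulmxBl -mulmxBr !det_mulmx mulrAC -det_mulmx.
by rewrite -map_mxM QP map_mx1 det1 mul1r.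
Qed.

Lemma char_poly_companion n (p : {poly R}) (A : 'M[R]_n) :
  p \is monic -> size p = n.+1 ->
  (forall i j : 'I_n, A i j = if i == n.-1 :> nat then - p`_j else (i.+1 == j)%:R) ->
  char_poly A = p.
Proof.
move=> p_monic size_p A_def; rewrite -[RHS](companionmxK p_monic) /companionmx.
have : (size p).-1 = n by rewrite size_p.
move: (size p).-1 => d d_n; subst n; congr char_poly.
by apply/matrixP => i j; rewrite mxE A_def.
Qed.

End CharPoly.

(** * Integer polynomials as coefficient lists *)

Definition zpoly := seq Z.

Fixpoint zpadd (p q : zpoly) : zpoly :=
  match p, q with
  | [::], _ => q
  | _, [::] => p
  | a :: p', b :: q' => (a + b)%Z :: zpadd p' q'
  end.
Definition zpscale (c : Z) (p : zpoly) : zpoly := map (Z.mul c) p.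
Fixpoint zpmul (p q : zpoly) : zpoly :=
  if p is a :: p' then zpadd (zpscale a q) (0%Z :: zpmul p' q) else [::].
Fixpoint zpexp (p : zpoly) (k : nat) : zpoly :=
  if k is k'.+1 then zpmul p (zpexp p k') else [:: 1%Z].
Definition zpXn (k : nat) : zpoly := ncons k 0%Z [:: 1%Z].
Definition zpsum (s : seq nat) (f : nat -> zpoly) : zpoly :=
  foldr (fun k acc => zpadd (f k) acc) [::] s.
Definition zpeqb (p q : zpoly) : bool :=
  all (fun a => Z.eqb a 0) (zpadd p (zpscale (-1) q)).

Section ZPolyEval.
Context {R : comNzRingType}.
Implicit Types (p q : zpoly) (x : R).

Definition of_Z (z : Z) : R := (int_of_Z z)%:~R.

Lemma of_Z0 : of_Z 0 = 0. Proof. by []. Qed.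
Lemma of_Z1 : of_Z 1 = 1. Proof. by []. Qed.
Lemma of_ZD a b : of_Z (a + b) = of_Z a + of_Z b.
Proof. by rewrite /of_Z (_ : (a + b)%Z = (a + b)%R) // !rmorphD. Qed.
Lemma of_ZM a b : of_Z (a * b) = of_Z a * of_Z b.
Proof. by rewrite /of_Z (_ : (a * b)%Z = (a * b)%R) // !rmorphM. Qed.
Lemma of_ZN a : of_Z (- a) = - of_Z a.
Proof. by rewrite /of_Z (_ : (- a)%Z = (- a)%R) // !rmorphN. Qed.
Lemma of_ZB a b : of_Z (a - b) = of_Z a - of_Z b.
Proof. by rewrite /of_Z (_ : (a - b)%Z = (a - b)%R) // !rmorphB. Qed.
Lemma of_Z_int (z : int) : of_Z (Z_of_int z) = z%:~R.
Proof. by rewrite /of_Z Z_of_intK. Qed.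

Lemma natr_of_Z n : n%:R = of_Z (Z.of_nat n) :> R.
Proof.
rewrite /of_Z pmulrn; congr intmul; case: n => //= n.
by rewrite SuccNat2Pos.id_succ.
Qed.

Lemma of_ZX a k : of_Z a ^+ k = of_Z (Zpower_nat a k) :> R.
Proof. by elim: k => [|k IH]; rewrite ?expr0 ?exprS ?IH -?of_ZM. Qed.

Fixpoint zhorner p x : R := if p is a :: p' then of_Z a + x * zhorner p' x else 0.

Lemma zhornerD p q x : zhorner (zpadd p q) x = zhorner p x + zhorner q x.
Proof.
elim: p q => [|a p IH] [|b q] /=; rewrite ?add0r ?addr0 // IH of_ZD; ring.
Qed.

Lemma zhornerZ c p x : zhorner (zpscale c p) x = of_Z c * zhorner p x.
Proof. by elim: p => [|a p IH] /=; rewrite ?mulr0 // IH of_ZM; ring. Qed.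

Lemma zhorner_cons0 p x : zhorner (0%Z :: p) x = x * zhorner p x.
Proof. by rewrite /= add0r. Qed.

Lemma zhornerM p q x : zhorner (zpmul p q) x = zhorner p x * zhorner q x.
Proof.
by elim: p => [|a p IH] /=; rewrite ?mul0r // zhornerD zhornerZ zhorner_cons0 IH; ring.
Qed.

Lemma zhornerX p k x : zhorner (zpexp p k) x = zhorner p x ^+ k.
Proof. by elim: k => [|k IH] /=; rewrite ?zhornerM ?IH ?exprS //= mulr0 addr0. Qed.

Lemma zhornerXn k x : zhorner (zpXn k) x = x ^+ k.
Proof. by elim: k => [|k IH] /=; rewrite ?IH ?add0r ?exprS // mulr0 addr0. Qed.

Lemma zhorner_sum s f x :
  zhorner (zpsum s f) x = foldr (fun k acc => zhorner (f k) x + acc) 0 s.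
Proof. by elim: s => [|k s IH] //=; rewrite zhornerD IH. Qed.

Lemma zhorner_eq {p q} x : zpeqb p q -> zhorner p x = zhorner q x.
Proof.
have zhorner0 r : all (fun a => Z.eqb a 0) r -> zhorner r x = 0.
  by elim: r => [|a r IH] //= /andP[/Z.eqb_spec -> /IH ->]; rewrite of_Z0; ring.
move=> /zhorner0; rewrite zhornerD zhornerZ (_ : of_Z (-1) = -1) //.
by move=> /eqP; rewrite mulN1r subr_eq0 => /eqP.
Qed.

Lemma zhorner_rcons p a x : zhorner (rcons p a) x = zhorner p x + of_Z a * x ^+ size p.
Proof. by elim: p => [|b p IH] /=; rewrite ?IH ?exprS; ring. Qed.

End ZPolyEval.

Fixpoint zppalin (m : nat) (p : zpoly) : zpoly :=
  if p is a :: q then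
    let r := zppalin m.-1 q in zpadd (zpscale a (zpXn m)) (zpadd r (0 :: 0 :: r)%Z)
  else [::].

Fixpoint zpbernstein (n i : nat) (u v : zpoly) (bs : seq Z) : zpoly :=
  if bs is b :: bs' then
    zpadd (zpscale b (zpmul (zpexp u i) (zpexp v (n - i)))) (zpbernstein n i.+1 u v bs')
  else [::].

Fixpoint zpderiv (p : zpoly) : zpoly :=
  if p is _ :: q then zpadd q (0%Z :: zpderiv q) else [::].

Definition zpabs (p : zpoly) : zpoly := map Z.abs p.

Fixpoint zpdivdiff_lip (p : zpoly) : zpoly :=
  if p is _ :: q then zpadd (zpscale 2 (zpderiv (zpabs q))) (0%Z :: zpdivdiff_lip q)
  else [::].

Section ZPolyField.
Context {F : fieldType}.
Implicit Types (p : zpoly) (x : F).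

Lemma zhorner_rev x p : x != 0 -> zhorner (rev p) x = x ^+ (size p).-1 * zhorner p x^-1.
Proof.
move=> x_neq0; elim: p => [|a p IH] /=; first by rewrite mulr0.
rewrite rev_cons zhorner_rcons size_rev IH.
case: p {IH} => [|b p] /=; first by ring.
by rewrite exprS; field.
Qed.

Lemma zhorner_palin x p m : x != 0 -> (size p <= m.+1)%nat ->
  zhorner (zppalin m p) x = x ^+ m * zhorner p (x + x^-1).
Proof.
move=> x_neq0; elim: p m => [|a p IH] m size_p /=; first by rewrite mulr0.
rewrite zhornerD zhornerZ zhornerXn zhornerD !zhorner_cons0.
case: p IH size_p => [|b p] IH size_p; first by rewrite /= !mulr0 !addr0; ring.
case: m size_p => [|m] // size_p; rewrite IH // !exprS.
by field.
Qed.

End ZPolyField.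

Lemma zhorner_conj (C : numClosedFieldType) p (x : C) : (zhorner p x)^* = zhorner p x^*.
Proof.
elim: p => [|a p IH] /=; rewrite ?rmorph0 // rmorphD rmorphM.
by congr (_ + _ * _); [exact: rmorph_int | exact: IH].
Qed.

Section ZPolyNum.
Context {R : numDomainType}.
Implicit Types (p u v : zpoly) (t x y z M r : R).

Lemma of_Z_gt0 a : Z.ltb 0 a -> 0 < of_Z a :> R.
Proof. by case: a => // a _; rewrite /of_Z ltr0z ltz_nat; apply/ssrnat.ltP/Pos2Nat.is_pos. Qed.

Lemma ler_of_Z a b : Z.leb a b -> of_Z a <= of_Z b :> R.
Proof.
move=> /Z.leb_le le_ab; rewrite -subr_ge0 -of_ZB /of_Z ler0z.
by case: (b - a)%Z (Zle_minus_le_0 _ _ le_ab) => // p; rewrite /Z.le.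
Qed.

Lemma ltr_of_Z a b : Z.ltb a b -> of_Z a < of_Z b :> R.
Proof.
move=> /Z.ltb_lt lt_ab; rewrite -subr_gt0 -of_ZB; apply: of_Z_gt0.
by apply/Z.ltb_lt; lia.
Qed.

Lemma normr_of_Z a : `|of_Z a| = of_Z (Z.abs a) :> R.
Proof.
rewrite /of_Z -intr_norm; congr intmul; case: a => //= p.
by rewrite NegzE normrN prednK //; apply/ssrnat.ltP/Pos2Nat.is_pos.
Qed.

Lemma zhorner_bernstein_ge0 n i u v bs t :
  0 < zhorner u t -> 0 < zhorner v t -> all (Z.ltb 0) bs ->
  0 <= zhorner (zpbernstein n i u v bs) t.
Proof.
move=> u_gt0 v_gt0; elim: bs i => [|b bs IH] i //= /andP[b_gt0 /(IH i.+1)].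
rewrite zhornerD zhornerZ zhornerM !zhornerX; apply: addr_ge0.
by rewrite ltW // !mulr_gt0 ?of_Z_gt0 ?exprn_gt0.
Qed.

Lemma zhorner_bernstein_gt0 n i u v b bs t :
  0 < zhorner u t -> 0 < zhorner v t -> all (Z.ltb 0) (b :: bs) ->
  0 < zhorner (zpbernstein n i u v (b :: bs)) t.
Proof.
move=> u_gt0 v_gt0 /andP[b_gt0 bs_gt0] /=.
rewrite zhornerD zhornerZ zhornerM !zhornerX ltr_wpDr ?zhorner_bernstein_ge0 //.
by rewrite !mulr_gt0 ?of_Z_gt0 ?exprn_gt0.
Qed.

Fixpoint divdiff x y p : R := if p is _ :: q then zhorner q x + y * divdiff x y q else 0.

Lemma zhornerB_divdiff x y p : zhorner p x - zhorner p y = (x - y) * divdiff x y p.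
Proof.
elim: p => [|a p IH] /=; first by rewrite subrr mulr0.
have -> : of_Z a + x * zhorner p x - (of_Z a + y * zhorner p y)
          = (x - y) * zhorner p x + y * (zhorner p x - zhorner p y) by ring.
by rewrite IH; ring.
Qed.

Lemma divdiff_diag z p : divdiff z z p = zhorner (zpderiv p) z.
Proof. by elim: p => [|a p IH] //=; rewrite zhornerD zhorner_cons0 IH. Qed.

Lemma normr_zhorner_le x M p : `|x| <= M -> `|zhorner p x| <= zhorner (zpabs p) M.
Proof.
move=> x_le; elim: p => [|a p IH] /=; first by rewrite normr0.
rewrite (le_trans (ler_normD _ _)) // normr_of_Z lerD2l normrM.
by rewrite ler_pM ?normr_ge0.
Qed.

Lemma normr_divdiff_le x y M p : `|x| <= M -> `|y| <= M ->
  `|divdiff x y p| <= zhorner (zpderiv (zpabs p)) M.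
Proof.
move=> x_le y_le; elim: p => [|a p IH] /=; first by rewrite normr0.
rewrite zhornerD zhorner_cons0 (le_trans (ler_normD _ _)) // lerD ?normr_zhorner_le //.
by rewrite normrM ler_pM ?normr_ge0.
Qed.

Lemma normr_divdiff_sub_le x y z M r p :
  `|x| <= M -> `|y| <= M -> `|z| <= M -> `|x - z| <= r -> `|y - z| <= r ->
  `|divdiff x y p - divdiff z z p| <= r * zhorner (zpdivdiff_lip p) M.
Proof.
move=> x_le y_le z_le xz_le yz_le; elim: p => [|a p IH] /=.
  by rewrite subrr normr0 mulr0.
rewrite zhornerD zhornerZ zhorner_cons0 (_ : of_Z 2 = 2) //.
have -> : zhorner p x + y * divdiff x y p - (zhorner p z + z * divdiff z z p)
    = (x - z) * divdiff x z p + y * (divdiff x y p - divdiff z z p)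
      + (y - z) * divdiff z z p by rewrite -zhornerB_divdiff; ring.
have dd_xz : `|(x - z) * divdiff x z p| <= r * zhorner (zpderiv (zpabs p)) M.
  by rewrite normrM ler_pM ?normr_divdiff_le.
have dd_zz : `|(y - z) * divdiff z z p| <= r * zhorner (zpderiv (zpabs p)) M.
  by rewrite normrM ler_pM ?normr_divdiff_le.
have tail_le : `|y * (divdiff x y p - divdiff z z p)| <= M * (r * zhorner (zpdivdiff_lip p) M).
  by rewrite normrM ler_pM.
apply: (le_trans (ler_normD _ _)); apply: (le_trans (lerD (ler_normD _ _) dd_zz)).
apply: (le_trans (lerD (lerD dd_xz tail_le) (lexx _))).
by rewrite le_eqVlt; apply/orP; left; apply/eqP; ring.
Qed.

Lemma eq_root_near x y z M r p :
  zhorner p x = 0 -> zhorner p y = 0 ->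
  `|x| <= M -> `|y| <= M -> `|z| <= M -> `|x - z| <= r -> `|y - z| <= r ->
  r * zhorner (zpdivdiff_lip p) M < `|zhorner (zpderiv p) z| -> x = y.
Proof.
move=> px0 py0 x_le y_le z_le xz_le yz_le lip_lt.
have [//|x_neq_y] := eqVneq x y; exfalso.
have dd_xy0 : divdiff x y p = 0.
  apply/eqP; have := zhornerB_divdiff x y p; rewrite px0 py0 subrr => /esym/eqP.
  by rewrite mulf_eq0 subr_eq0 (negPf x_neq_y).
have := @normr_divdiff_sub_le _ _ _ _ _ p x_le y_le z_le xz_le yz_le.
rewrite dd_xy0 sub0r normrN divdiff_diag => /(lt_le_trans lip_lt).
by rewrite ltxx.
Qed.

End ZPolyNum.

(** * Gaussian rationals *)

Section ZFrac.
Context {R : numFieldType}.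

Definition zfrac (a b : Z) : R := of_Z a / of_Z b.

Lemma of_Z_neq0 b : Z.ltb 0 b -> of_Z b != 0 :> R.
Proof. by move=> b_gt0; rewrite lt0r_neq0 ?of_Z_gt0. Qed.

Lemma zfrac_gt0 a b : Z.ltb 0 a -> Z.ltb 0 b -> 0 < zfrac a b.
Proof. by move=> a_gt0 b_gt0; rewrite divr_gt0 ?of_Z_gt0. Qed.

Lemma zfracD a b c d : Z.ltb 0 b -> Z.ltb 0 d ->
  zfrac a b + zfrac c d = zfrac (a * d + c * b) (b * d).
Proof. by move=> b_gt0 d_gt0; rewrite /zfrac of_ZD !of_ZM; field; rewrite !of_Z_neq0. Qed.

Lemma zfracB a b c d : Z.ltb 0 b -> Z.ltb 0 d ->
  zfrac a b - zfrac c d = zfrac (a * d - c * b) (b * d).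
Proof. by move=> b_gt0 d_gt0; rewrite /zfrac of_ZB !of_ZM; field; rewrite !of_Z_neq0. Qed.

Lemma zfracM a b c d : zfrac a b * zfrac c d = zfrac (a * c) (b * d).
Proof. by rewrite /zfrac !of_ZM invfM; ring. Qed.

Lemma ler_zfrac a b c d : Z.ltb 0 b -> Z.ltb 0 d -> Z.leb (a * d) (c * b) ->
  zfrac a b <= zfrac c d.
Proof.
move=> b_gt0 d_gt0 le_ad_cb; rewrite ler_pdivrMr ?of_Z_gt0 // mulrAC.
by rewrite ler_pdivlMr ?of_Z_gt0 // -!of_ZM ler_of_Z.
Qed.

Lemma ltr_zfrac a b c d : Z.ltb 0 b -> Z.ltb 0 d -> Z.ltb (a * d) (c * b) ->
  zfrac a b < zfrac c d.
Proof.
move=> b_gt0 d_gt0 lt_ad_cb; rewrite ltr_pdivrMr ?of_Z_gt0 // mulrAC.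
by rewrite ltr_pdivlMr ?of_Z_gt0 // -!of_ZM ltr_of_Z.
Qed.

Lemma normr_zfrac a b : Z.ltb 0 b -> `|zfrac a b| = zfrac (Z.abs a) b.
Proof.
move=> b_gt0; rewrite normrM normfV !normr_of_Z (Z.abs_eq b) //.
by move/Z.ltb_lt: b_gt0; lia.
Qed.

Lemma zfrac1 a : zfrac a 1 = of_Z a.
Proof. by rewrite /zfrac of_Z1 divr1. Qed.

Lemma zfrac_int a b c : Z.ltb 0 b -> a = (c * b)%Z -> zfrac a b = of_Z c.
Proof. by move=> b_gt0 ->; rewrite /zfrac of_ZM mulfK ?of_Z_neq0. Qed.

End ZFrac.

Section GaussianRationals.
Context {C : numClosedFieldType}.
Implicit Types a b n : Z.

Definition gauss a b n : C := (of_Z a + of_Z b * 'i) / of_Z n.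

Lemma gauss_zfrac a b n : gauss a b n = zfrac a n + 'i * zfrac b n.
Proof. by rewrite /gauss /zfrac; ring. Qed.

Lemma gauss0 a n : gauss a 0 n = zfrac a n.
Proof. by rewrite /gauss /zfrac of_Z0 mul0r addr0. Qed.

Lemma of_Z_gauss e : of_Z e = gauss e 0 1.
Proof. by rewrite gauss0 zfrac1. Qed.

Lemma gauss_oppE a b n : gauss (- a) (- b) n = - of_Z a / of_Z n - of_Z b / of_Z n * 'i.
Proof. by rewrite /gauss !of_ZN; ring. Qed.

Lemma gauss_conj a b n : (gauss a b n)^* = gauss a (- b) n.
Proof.
rewrite /gauss fmorph_div rmorphD rmorphM /= conjCi of_ZN /of_Z !rmorph_int; ring.
Qed.

Lemma gaussD a b n u v d : Z.ltb 0 n -> Z.ltb 0 d ->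
  gauss a b n + gauss u v d = gauss (a * d + u * n) (b * d + v * n) (n * d).
Proof.
by move=> n_gt0 d_gt0; rewrite /gauss !(of_ZD, of_ZM); field; rewrite !of_Z_neq0.
Qed.

Lemma gaussB a b n a' b' n' : Z.ltb 0 n -> Z.ltb 0 n' ->
  gauss a b n - gauss a' b' n' = gauss (a * n' - a' * n) (b * n' - b' * n) (n * n').
Proof.
by move=> n_gt0 n'_gt0; rewrite /gauss !(of_ZB, of_ZM); field; rewrite !of_Z_neq0.
Qed.

Lemma gaussM a b n u v d :
  gauss a b n * gauss u v d = gauss (a * u - b * v) (a * v + b * u) (n * d).
Proof.
rewrite /gauss mulf_div !(of_ZB, of_ZD, of_ZM); congr (_ / _).
have i2 : 'i * 'i = -1 :> C by rewrite -expr2 sqrCi.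
transitivity (of_Z a * of_Z u + (of_Z a * of_Z v + of_Z b * of_Z u) * 'i
              + of_Z b * of_Z v * ('i * 'i) :> C); first by ring.
by rewrite i2; ring.
Qed.

Lemma gauss_mul_conj a b n : gauss a b n * gauss a (- b) n = zfrac (a * a + b * b) (n * n).
Proof. by rewrite gaussM -gauss0; congr gauss; lia. Qed.

Lemma gauss_sub_conj a b n : gauss a b n - gauss a (- b) n = 'i * zfrac (b + b) n.
Proof. by rewrite /gauss /zfrac of_ZD of_ZN; ring. Qed.

Lemma normr_gauss_ge a b n : Z.ltb 0 n -> zfrac (Z.abs a) n <= `|gauss a b n|.
Proof.
move=> n_gt0; rewrite -normr_zfrac // gauss_zfrac.
have zfrac_real u v : (zfrac u v : C) \is Num.real by rewrite rpred_div ?rpred_int.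
rewrite -{1}(Re_rect (zfrac_real a n) (zfrac_real b n)).
exact: (leif_normC_Re_Creal _).1.
Qed.

Lemma normr_gauss_le a b n : Z.ltb 0 n -> `|gauss a b n| <= zfrac (Z.abs a + Z.abs b) n.
Proof.
move=> n_gt0; rewrite gauss_zfrac (le_trans (ler_normD _ _)) //.
by rewrite [`|'i * _|]normrM normCi mul1r !normr_zfrac // /zfrac of_ZD mulrDl.
Qed.

Lemma normr_sub_gauss_lt x a b n a' b' n' r :
  `|x - gauss a b n| < r -> Z.ltb 0 n -> Z.ltb 0 n' ->
  `|x - gauss a' b' n'| < r + zfrac (Z.abs (a * n' - a' * n) + Z.abs (b * n' - b' * n)) (n * n').
Proof.
move=> xd_lt n_gt0 n'_gt0; rewrite -(subrKA (gauss a b n)) gaussB //.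
have nn'_gt0 : Z.ltb 0 (n * n') by move/Z.ltb_lt: n_gt0; move/Z.ltb_lt: n'_gt0; lia.
by rewrite (le_lt_trans (ler_normD _ _)) // ltr_leD // normr_gauss_le.
Qed.

End GaussianRationals.

Fixpoint zpgauss (a b n : Z) (p : zpoly) : Z * Z * Z :=
  if p is e :: q then
    let: (u, v, d) := zpgauss a b n q in
    (e * (n * d) + (a * u - b * v), b * u + a * v, n * d)%Z
  else (0, 0, 1)%Z.

Lemma zhorner_gauss (C : numClosedFieldType) a b n p : Z.ltb 0 n ->
  zhorner p (gauss a b n : C)
    = gauss (zpgauss a b n p).1.1 (zpgauss a b n p).1.2 (zpgauss a b n p).2
  /\ Z.ltb 0 (zpgauss a b n p).2.
Proof.
move=> n_gt0; elim: p => [|e p IH] /=; first by rewrite gauss0 /zfrac of_Z0 mul0r.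
case: (zpgauss a b n p) IH => [[u v] d] /= [-> d_gt0].
have nd_gt0 : Z.ltb 0 (n * d) by apply/Z.ltb_lt; move/Z.ltb_lt: n_gt0; move/Z.ltb_lt: d_gt0; nia.
split => //; rewrite of_Z_gauss gaussM gaussD //.
by congr gauss; lia.
Qed.

(** * Roots near a point *)

Section ClosedField.
Context {C : numClosedFieldType}.
Implicit Types x c w r : C.

Lemma conj_neq_near x c r : `|x - c| < r -> r *+ 2 <= `|c - c^*| -> x^* != x.
Proof.
move=> xc_lt r2_le; apply/eqP => x_real.
have : `|c - c^*| < r *+ 2.
  have -> : c - c^* = (c - x) + (x - c)^* by rewrite rmorphB /= x_real; ring.
  by rewrite (le_lt_trans (ler_normD _ _)) // norm_conjC distrC mulr2n ltrD.
by move/lt_le_trans/(_ r2_le); rewrite ltxx.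
Qed.

Lemma normr_inv_sub_conj_le x c : x != 0 ->
  `|x^-1 - c^*| <= (`|1 - c * c^*| + `|x - c| * `|c|) / `|x|.
Proof.
move=> x_neq0; have -> : x^-1 - c^* = ((1 - c * c^*) - (x - c) * c^*) / x by field.
rewrite normrM normfV ler_wpM2r ?invr_ge0 ?normr_ge0 //.
by rewrite (le_trans (ler_normB _ _)) // normrM norm_conjC.
Qed.

Lemma add_conj_real w : w + w^* \is Num.real.
Proof. by apply/CrealP; rewrite rmorphD /= conjCK addrC. Qed.

Lemma real_addr1_gt0 w : w \is Num.real -> `|w| < 1 -> 0 < 1 + w.
Proof.
move=> w_real w_lt1; rewrite -[w]subr0 in w_lt1.
by have := real_ltr_distlCBl _ w_lt1; rewrite subr0 sub0r -subr_gt0 opprK addrC; apply.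
Qed.

Lemma zhorner_root_conj p x : zhorner p x = 0 -> zhorner p x^* = 0.
Proof. by move=> px0; rewrite -zhorner_conj px0 rmorph0. Qed.

Lemma zhorner_root_inv p x : rev p = p -> x != 0 -> zhorner p x = 0 -> zhorner p x^-1 = 0.
Proof.
move=> p_palin x_neq0 px0.
by rewrite -p_palin zhorner_rev ?invr_neq0 // invrK px0 mulr0.
Qed.

End ClosedField.

(** * The isometry *)

Definition F14_seq : seq (seq int) := [::
  [:: 3; -5; 1; 3; -1; -3; 3; 2; 0; 0; -3; 0; 6; 6];
  [:: 3; -5; 1; 3; 0; -4; 3; 1; 0; 0; -3; -1; 5; 6];
  [:: 5; -8; 2; 4; 0; -6; 5; 3; 0; 0; -5; 0; 10; 10];
  [:: 6; -11; 3; 6; 0; -9; 7; 4; 0; 0; -7; 0; 13; 14];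
  [:: 5; -9; 2; 5; 0; -7; 6; 3; 0; 0; -6; 1; 11; 12];
  [:: 4; -8; 2; 4; 0; -5; 4; 4; 0; 0; -5; 2; 10; 11];
  [:: 2; -5; 2; 2; 0; -3; 3; 2; 0; 0; -3; 1; 6; 7];
  [:: 2; -3; 1; 1; 0; -2; 2; 2; 0; 0; -2; 1; 4; 5];
  [:: 0; 0; 0; 0; 0; 0; 0; -1; 1; 0; 0; -1; -1; -1];
  [:: -1; 0; 0; -1; 1; 1; -1; 0; 0; 2; 1; 2; -1; -1];
  [:: 0; 0; 0; 0; 0; 0; 0; -2; 1; 0; 0; -2; -2; -2];
  [:: 1; 0; 0; 1; -1; -1; 1; 0; 0; -1; -1; -2; 1; 1];
  [:: -2; 2; -1; -1; 1; 1; -1; -2; 0; 0; 2; -1; -4; -4];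
  [:: -1; 2; 0; -1; 0; 1; -1; -2; 0; 0; 1; -1; -3; -3]].
Definition Q_seq : seq (seq int) := [::
  [:: 3; 0; -1; -1; 1; 0; 0; 0; 1; 0; -1; 0; 1; 1];
  [:: -2; 1; 2; -2; 1; 0; -1; 1; 0; 0; 1; 0; -1; -1];
  [:: -1; -1; 0; 2; -2; 0; 1; 0; 0; 0; 0; 0; 0; 0];
  [:: 0; -1; -1; 2; -1; 0; 0; 0; 0; 0; 0; 0; 0; 0];
  [:: -1; 0; 0; 1; -1; 1; -1; 0; 0; 0; 0; 0; 0; 0];
  [:: 0; 1; -1; 0; 0; 0; 1; -2; 0; 0; 0; 0; -1; -1];
  [:: 0; 0; 0; -1; 2; -1; 0; 0; 0; 0; 0; 0; 0; 0];
  [:: 1; 0; 0; -1; 1; 0; 0; 0; 0; 0; 0; 0; 1; 0];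
  [:: -1; 0; 2; -1; 0; 0; 0; 0; 0; 0; 0; 0; 0; 0];
  [:: 0; -1; 0; 1; -1; 0; 1; 0; 0; 0; 0; 0; 0; 1];
  [:: -1; 0; 0; 1; -1; 0; 0; 1; 0; 0; 0; 0; 0; 0];
  [:: -1; -2; 0; 2; -2; 2; -1; 1; 0; 1; 0; 2; 1; 1];
  [:: 2; 1; -2; 0; 0; 0; 1; -2; 0; 0; 0; -1; -1; -1];
  [:: 0; 1; 1; -2; 2; -1; -1; 1; 0; 0; 0; 0; 0; 0]].
Definition Qinv_seq : seq (seq int) := [::
  [:: 0; 0; -3; 3; -1; 1; -1; 1; 2; 1; 2; 0; 0; 0];
  [:: 0; 0; -3; 3; 0; 2; -1; 2; 2; 2; 3; 0; 0; 1];
  [:: 0; 0; -5; 5; -1; 2; -1; 2; 4; 2; 4; 0; 0; 0];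
  [:: 0; 0; -7; 7; -1; 3; -1; 3; 5; 3; 6; 0; 0; 0];
  [:: 0; 0; -6; 5; -1; 2; 0; 2; 4; 2; 5; 0; 0; -1];
  [:: 0; 0; -5; 3; -1; 1; 0; 1; 3; 1; 4; 0; 0; -2];
  [:: 0; 0; -3; 2; -1; 1; 0; 1; 2; 1; 3; 0; 0; -1];
  [:: 0; 0; -2; 1; -1; 0; 0; 0; 1; 0; 2; 0; 0; -1];
  [:: 1; 1; 1; 1; 1; 1; 0; 1; 0; 1; 0; 0; 0; 1];
  [:: 0; 0; 1; 0; 1; 0; 1; 1; 1; 1; 1; 1; 2; 2];
  [:: 0; 1; 1; 1; 1; 1; -1; 2; -1; 2; -1; 0; 0; 2];
  [:: 0; 0; -1; 1; -1; 1; -1; 0; 0; 0; 0; 0; -1; 0];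
  [:: 0; 0; 2; -1; 1; 0; 0; 1; -1; 0; -1; 0; 0; 1];
  [:: 0; 0; 1; -1; 1; 0; 0; 0; -1; 1; -1; 0; 0; 1]].
Definition phi14_seq : seq int := [:: 1; 0; 0; -1; -1; 0; 0; 1; 0; 0; -1; -1; 0; 0; 1].

Definition F_seq : seq (seq int) := seqmx_block 8 14 (seqmx_id 8) F14_seq.

Definition F14 : 'M[int]_14 := mx_of_seqmx 14 F14_seq.
Definition F_K3 : 'M[int]_22 := mx_of_seqmx 22 F_seq.

Lemma phi14E : phi14 = Poly phi14_seq.
Proof.
rewrite /phi14 /= !cons_poly_def polyC0 polyC1 polyCN polyC1 !mul0r !add0r.
by ring.
Qed.

Lemma phi14_monic : phi14 \is monic.
Proof. by rewrite phi14E monicE /lead_coef (@PolyK _ 0 phi14_seq). Qed.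

Lemma size_phi14 : size phi14 = 15.
Proof. by rewrite phi14E (@PolyK _ 0 phi14_seq). Qed.

Lemma char_poly_F14 : char_poly F14 = phi14.
Proof.
pose Q := mx_of_seqmx 14 Q_seq; pose Qinv := mx_of_seqmx 14 Qinv_seq.
have F14_conj : F14 = Qinv *m (mx_of_seqmx 14 (seqmx_companion 14 phi14_seq))^T *m Q.
  by rewrite mx_of_seqmx_tr !mx_of_seqmx_mul; apply: mx_of_seqmx_eq; vm_compute.
have QQinv : Q *m Qinv = 1%:M.
  by rewrite mx_of_seqmx_mul -(mx_of_seqmx_id 14); apply: mx_of_seqmx_eq; vm_compute.
rewrite F14_conj char_poly_conj // char_poly_tr mx_of_seqmx_of_fun.
apply: char_poly_companion; [exact: phi14_monic | exact: size_phi14 |].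
by move=> i j; rewrite mxE phi14E coef_Poly.
Qed.

Lemma F_K3_block : (F_K3 : 'M_(8 + 14)) = block_mx 1%:M 0 0 F14.
Proof. by rewrite -(mx_of_seqmx_id 8); apply: (mx_of_seqmx_block 8 14). Qed.

Lemma char_poly_F_K3 : char_poly F_K3 = ('X - 1) ^+ 8 * phi14.
Proof.
have -> : char_poly F_K3 = char_poly (block_mx (1%:M : 'M[int]_8) 0 0 F14)
  by rewrite -F_K3_block.
by rewrite char_poly_block_diag char_poly_scalar1 char_poly_F14.
Qed.

Lemma det_F_K3 : \det F_K3 = 1.
Proof.
by have := char_poly_det F_K3; rewrite char_poly_F_K3 -horner_coef0 /phi14 !hornerE.
Qed.

Lemma F_K3_lattice_aut : lattice_aut F_K3.
Proof.
split; first by rewrite unitmxE det_F_K3 unitr1.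
have -> : K3gram = mx_of_seqmx 22 (seqmx_of_fun 22 k3gram_nat) by rewrite mx_of_seqmx_of_fun.
by rewrite mx_of_seqmx_tr !mx_of_seqmx_mul; apply: mx_of_seqmx_eq; vm_compute.
Qed.

(** * The eigenvector *)

Section ZPolyVectors.
Context {R : comNzRingType}.

Lemma zhorner_Poly (s : seq int) (x : R) :
  zhorner (map Z_of_int s) x = (map_poly (fun z : int => z%:~R) (Poly s)).[x].
Proof.
rewrite map_Poly_id0 // horner_Poly.
by elim: s => [|a s IH] //=; rewrite of_Z_int IH addrC mulrC.
Qed.

Definition zpcol n (S : seq zpoly) (x : R) : 'cV[R]_n := \col_(i < n) zhorner (nth [::] S i) x.

Definition zp_eigen_certificate n (A : seq (seq int)) (S : seq zpoly) (m : seq Z) (p : zpoly) :=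
  all (fun i => zpeqb
         (zpsum (iota 0 n) (fun k => zpscale (Z_of_int (seqmx_entry A i k)) (nth [::] S k)))
         (zpadd (0%Z :: nth [::] S i) (zpscale (nth 0%Z m i) p)))
      (iota 0 n).

Lemma zpcol_eigen n A S m p (x : R) :
  zp_eigen_certificate n A S m p -> zhorner p x = 0 ->
  map_mx (fun z : int => z%:~R) (mx_of_seqmx n A) *m zpcol n S x = x *: zpcol n S x.
Proof.
move=> /allP cert px0; apply/matrixP => i j; rewrite !mxE.
under eq_bigr => k _ do rewrite !mxE -of_Z_int -zhornerZ.
rewrite (sum_ord_foldr _ (fun k =>
  zhorner (zpscale (Z_of_int (seqmx_entry A i k)) (nth [::] S k)) x)) -zhorner_sum.
have i_in : (i : nat) \in iota 0 n by rewrite mem_iota ltn_ord.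
by rewrite (zhorner_eq x (cert i i_in)) zhornerD zhornerZ px0 mulr0 addr0 zhorner_cons0.
Qed.

End ZPolyVectors.

Definition zpgram n (G : nat -> nat -> int) (S : seq zpoly) : zpoly :=
  zpsum (iota 0 n) (fun b => zpsum (iota 0 n) (fun a =>
    zpmul (zpscale (Z_of_int (G a b)) (nth [::] S a)) (rev (nth [::] S b)))).

Lemma zhorner_zpgram {F : fieldType} n G S d (x : F) : x != 0 ->
  all (fun k => size (nth [::] S k) == d.+1) (iota 0 n) ->
  zhorner (zpgram n G S) x
  = x ^+ d * \sum_(b < n) (\sum_(a < n) zhorner (nth [::] S a) x * (G a b)%:~R)
                           * zhorner (nth [::] S b) x^-1.
Proof.
move=> x_neq0 /allP size_S; rewrite /zpgram zhorner_sum -sum_ord_foldr mulr_sumr.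
apply: eq_bigr => b _; rewrite zhorner_sum -sum_ord_foldr mulr_suml mulr_sumr.
apply: eq_bigr => a _; rewrite zhornerM zhornerZ of_Z_int zhorner_rev //.
by rewrite (eqP (size_S b _)) ?mem_iota ?ltn_ord //=; ring.
Qed.

Section EigenvectorData.
Local Open Scope Z_scope.

Definition sigma_seq : seq zpoly := nseq 8 (nseq 14 0) ++ [::
  [:: -4; 1; -4; 5; -2; 2; -1; -1; 4; -1; 3; -3; 0; 0];
  [:: -5; 1; -4; 5; -2; 0; -1; -1; 5; 0; 3; -3; 0; 0];
  [:: -7; 1; -7; 8; -4; 3; -2; -1; 7; -1; 5; -5; 0; 0];
  [:: -10; 2; -9; 11; -6; 3; -3; -1; 10; -1; 7; -7; 0; 0];
  [:: -7; 2; -7; 8; -6; 3; -2; 1; 8; -1; 5; -6; 0; 0];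
  [:: -5; 2; -5; 6; -5; 3; -1; 2; 6; -1; 3; -5; 0; 0];
  [:: -4; 1; -4; 4; -3; 2; 0; 1; 4; -1; 2; -3; 0; 0];
  [:: -2; 1; -2; 3; -2; 2; 0; 1; 2; -1; 1; -2; 0; 0];
  [:: -2; -2; -2; -1; 1; -1; 0; -2; -1; -1; 0; 1; 1; 1];
  [:: 0; -1; 0; -1; 1; 0; 0; 0; -1; 1; 0; 1; 0; 0];
  [:: -2; -2; -1; -1; 3; -2; 0; -3; -1; 0; 1; 1; 1; 0];
  [:: -1; 1; -1; 2; -1; 0; 0; -1; 2; -1; 1; -1; 0; 0];
  [:: 1; -1; 1; -3; 2; -2; 1; -1; -2; 1; -1; 2; 0; 0];
  [:: 1; -1; 2; -2; 2; -2; 0; 0; -1; 1; -1; 1; 0; 0]].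

Definition sigma_mult : seq Z := nseq 16 0 ++ [:: -1].

Definition Rform : zpoly := [:: -4; -16; -46; -78; -28; 96; 98; -35; -70; 4; 20; 0; -2].

Definition Rform_bernstein : seq Z := [::
  132572702068244033596159868318; 1619381260981604607242025865560;
  9060079148976150248342734930300; 30700939595104232372896019035000;
  70179312777145709908631258381250; 114011938613973565922223374350000;
  134982083103706928348616790125000; 117348297272362268219281328750000;
  74350293193372975232459925781250; 33482184436524171001464296875000;
  10172908188028176927988398437500; 1872393707601377441058984375000;
  157885773249034864530761718750].

End EigenvectorData.

Definition phi14_zp : zpoly := map Z_of_int phi14_seq.

Lemma sigma_eigen_certificate : zp_eigen_certificate 22 F_seq sigma_seq sigma_mult phi14_zp.
Proof. by vm_compute. Qed.

Lemma size_sigma_seq : all (fun k => size (nth [::] sigma_seq k) == 14) (iota 0 22).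
Proof. by vm_compute. Qed.

Lemma sigma_gram_certificate : zpeqb (zpgram 22 k3gram_nat sigma_seq) (zppalin 13 Rform).
Proof. by vm_compute. Qed.

Lemma Rform_bernstein_certificate :
  zpeqb (zpscale (400 ^ 12) Rform)
        (zpbernstein 12 0 [:: 397; 200] [:: -395; -200] Rform_bernstein)%Z.
Proof. by vm_compute. Qed.

Definition sigma_K3 {R : comNzRingType} (x : R) : 'cV[R]_22 := zpcol 22 sigma_seq x.

Lemma F_K3_sigma {R : comNzRingType} (x : R) :
  root (map_poly (fun z : int => z%:~R) phi14) x ->
  map_mx (fun z : int => z%:~R) F_K3 *m sigma_K3 x = x *: sigma_K3 x.
Proof.
move=> /rootP phi_x; apply: zpcol_eigen sigma_eigen_certificate _.
by rewrite zhorner_Poly -phi14E.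
Qed.

Section K3FormC.
Context {C : numClosedFieldType}.
Implicit Types u v : 'cV[C]_22.

Lemma k3formC_sum u v :
  k3formC u v = \sum_(b < 22) (\sum_(a < 22) u a 0 * (k3gram_nat a b)%:~R) * v b 0.
Proof.
rewrite /k3formC mxE; apply: eq_bigr => b _; rewrite !mxE; congr (_ * _).
by apply: eq_bigr => a _; rewrite !mxE.
Qed.

Lemma k3formCZ (a b : C) u v : k3formC (a *: u) (b *: v) = a * b * k3formC u v.
Proof. by rewrite /k3formC linearZ /= [(a *: u)^T]linearZ /= -!scalemxAl !mxE; ring. Qed.

Lemma k3formC_isometry F u v : lattice_aut F ->
  let FC := map_mx (fun z : int => z%:~R) F in k3formC (FC *m u) (FC *m v) = k3formC u v.
Proof.
move=> [_ F_iso] FC; rewrite /k3formC trmx_mul.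
have GC_iso : map_mx (fun z : int => z%:~R) K3gram
              = FC^T *m map_mx (fun z : int => z%:~R) K3gram *m FC.
  by rewrite /FC map_trmx -!map_mxM F_iso.
by rewrite [in RHS]GC_iso !mulmxA.
Qed.

Lemma k3formC_eigen_isotropic F u (d : C) : lattice_aut F ->
  map_mx (fun z : int => z%:~R) F *m u = d *: u -> d ^+ 2 != 1 -> k3formC u u = 0.
Proof.
move=> F_aut Fu d2_neq1; have := k3formC_isometry F u u F_aut; rewrite /= Fu k3formCZ.
move=> /eqP; rewrite -subr_eq0 -{2}[k3formC u u]mul1r -mulrBl mulf_eq0 -expr2 subr_eq0.
by rewrite (negPf d2_neq1) => /eqP.
Qed.

Lemma k3formC_sigma_conj (x : C) : x != 0 -> x^* = x^-1 ->
  k3formC (sigma_K3 x) (map_mx (fun z : C => z^*) (sigma_K3 x)) = zhorner Rform (x + x^-1).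
Proof.
move=> x_neq0 x_conj; apply: (mulfI (expf_neq0 13 x_neq0)).
rewrite -zhorner_palin // -(zhorner_eq _ sigma_gram_certificate).
rewrite (zhorner_zpgram _ _ _ 13) ?size_sigma_seq //.
congr (_ * _); rewrite k3formC_sum; apply: eq_bigr => b _.
rewrite !mxE zhorner_conj x_conj; congr (_ * _).
by apply: eq_bigr => a _; rewrite !mxE.
Qed.

End K3FormC.

Lemma Rform_gt0 {R : numDomainType} (t : R) :
  0 < zhorner [:: 397; 200]%Z t -> 0 < zhorner [:: -395; -200]%Z t -> 0 < zhorner Rform t.
Proof.
move=> u_gt0 v_gt0.
have := zhorner_bernstein_gt0 12 0 _ _ _ _ _ u_gt0 v_gt0 (isT : all (Z.ltb 0) Rform_bernstein).
by rewrite -(zhorner_eq _ Rform_bernstein_certificate) zhornerZ pmulr_rgt0 ?of_Z_gt0.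
Qed.

(** * Locating delta *)

Section Localisation.
Context {C : numClosedFieldType}.
Implicit Types x : C.

Local Notation c := (gauss (-99) (-14) 100 : C).
Local Notation r0 := (zfrac 22 10000 : C).

Lemma conj_c : c^* = gauss (-99) 14 100.
Proof. exact: gauss_conj. Qed.

Lemma normr_c_ge : zfrac 99 100 <= `|c|.
Proof. exact: (normr_gauss_ge (-99) (-14) 100 isT). Qed.

Lemma normr_c_le1 : `|c| <= 1.
Proof.
rewrite -(expr_le1 (n := 2)) // normCK conj_c gauss_mul_conj -of_Z1 -zfrac1.
by rewrite ler_zfrac.
Qed.

Lemma near_c_nonreal x : `|x - c| < r0 -> x^* != x.
Proof.
move=> xc_lt; apply: conj_neq_near xc_lt _.
rewrite conj_c -[14%Z]/(Z.opp (-14)) gauss_sub_conj normrM normCi mul1r normr_zfrac //.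
by rewrite mulr2n zfracD // ler_zfrac.
Qed.

Lemma normr_near_c_ge x : `|x - c| < r0 -> zfrac 97 100 <= `|x|.
Proof.
move=> xc_lt; have := lerB_dist c (c - x).
rewrite (_ : c - (c - x) = x) 1?distrC; last by rewrite opprB addrC subrK.
apply: le_trans; rewrite lerBrDr (le_trans _ normr_c_ge) //.
by rewrite (le_trans (lerD (lexx _) (ltW xc_lt))) // zfracD // ler_zfrac.
Qed.

Lemma near_c_neq0 x : `|x - c| < r0 -> x != 0.
Proof.
move=> /normr_near_c_ge x_ge; rewrite -normr_gt0 (lt_le_trans _ x_ge) //.
exact: zfrac_gt0.
Qed.

Lemma normr_inv_near_c x : `|x - c| < r0 -> `|x^-1 - c^*| <= zfrac 26 10000.
Proof.
move=> xc_lt; have x_neq0 := near_c_neq0 _ xc_lt.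
apply: (le_trans (normr_inv_sub_conj_le _ c x_neq0)).
rewrite ler_pdivrMr ?normr_gt0 //.
have one_sub_cc : `|1 - c * c^*| = zfrac 3 10000.
  by rewrite conj_c gauss_mul_conj -of_Z1 -zfrac1 zfracB // normr_zfrac.
have x_ge := normr_near_c_ge _ xc_lt.
rewrite one_sub_cc (le_trans (lerD (lexx _) (ler_pM _ _ (ltW xc_lt) normr_c_le1))) //.
rewrite mulr1 (le_trans _ (ler_wpM2l _ x_ge)) ?zfracD ?zfracM ?ler_zfrac //.
exact/ltW/zfrac_gt0.
Qed.

Lemma phi14_isolation :
  zfrac 26 10000 * zhorner (zpdivdiff_lip phi14_zp) (zfrac 101 100)
  < `|zhorner (zpderiv phi14_zp) c^*| :> C.
Proof.
rewrite conj_c -(gauss0 101).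
have [-> _] := zhorner_gauss C 101 0 100 (zpdivdiff_lip phi14_zp) isT.
have [-> D_gt0] := zhorner_gauss C (-99) 14 100 (zpderiv phi14_zp) isT.
rewrite (lt_le_trans _ (normr_gauss_ge _ _ _ D_gt0)) //.
have -> : (zpgauss 101 0 100 (zpdivdiff_lip phi14_zp)).1.2 = 0%Z by vm_compute.
by rewrite gauss0 zfracM ltr_zfrac; vm_compute.
Qed.

Lemma conj_eq_inv_near_c x : zhorner phi14_zp x = 0 -> `|x - c| < r0 -> x^* = x^-1.
Proof.
move=> phi_x xc_lt; have x_neq0 := near_c_neq0 _ xc_lt.
pose M : C := zfrac 101 100; pose r : C := zfrac 26 10000.
have r0_le_r : r0 <= r by rewrite ler_zfrac.
have one_add_r_le_M : 1 + r <= M by rewrite -of_Z1 -zfrac1 zfracD // ler_zfrac.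
have normr_c_le_M : `|c| <= M.
  rewrite (le_trans normr_c_le1) // (le_trans _ one_add_r_le_M) // lerDl.
  exact/ltW/zfrac_gt0.
have near_le_M y : `|y - c^*| <= r -> `|y| <= M.
  move=> yc_le; rewrite (le_trans _ one_add_r_le_M) // -[y](subrK c^*) addrC.
  by rewrite (le_trans (ler_normD _ _)) // lerD // norm_conjC normr_c_le1.
have xc_le : `|x^* - c^*| <= r by rewrite -rmorphB norm_conjC (le_trans (ltW xc_lt)).
have xinv_le := normr_inv_near_c _ xc_lt.
apply: (@eq_root_near C x^* x^-1 c^* M r phi14_zp).
- exact: zhorner_root_conj.
- exact: zhorner_root_inv.
- exact: near_le_M.
- exact: near_le_M.
- by rewrite norm_conjC.
- exact: xc_le.
- exact: xinv_le.
- exact: phi14_isolation.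
Qed.

Lemma trace_near_c x : `|x - c| < r0 ->
  0 < zhorner [:: 397; 200]%Z (x + x^*) /\ 0 < zhorner [:: -395; -200]%Z (x + x^*).
Proof.
move=> xc_lt; set y := x - c; pose w := of_Z 200 * (y + y^*).
have c_add_conj : c + c^* = zfrac (-19800) 10000.
  by rewrite conj_c gaussD // -gauss0.
have lin_eval a0 a1 : zhorner [:: a0; a1] (x + x^*)
    = zfrac (a0 * 10000 + a1 * -19800) 10000 + of_Z a1 * (y + y^*).
  have -> : x + x^* = (y + y^*) + (c + c^*) by rewrite /y rmorphB; ring.
  rewrite c_add_conj /= mulr0 addr0 /zfrac !(of_ZD, of_ZM).
  by field.
have w_real : w \is Num.real by rewrite rpredM ?add_conj_real // rpred_int.
have w_lt1 : `|w| < 1.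
  have y_le : `|y + y^*| <= r0 + r0.
    by rewrite (le_trans (ler_normD _ _)) // norm_conjC lerD // ltW.
  rewrite normrM normr_of_Z (le_lt_trans (ler_wpM2l _ y_le)) // ?zfracD //.
  by rewrite -zfrac1 zfracM -of_Z1 -zfrac1 ltr_zfrac.
split; rewrite lin_eval (zfrac_int _ _ 1) // of_Z1.
  exact: real_addr1_gt0 w_real w_lt1.
rewrite -[(-200)%Z]/(Z.opp 200) of_ZN mulNr.
by apply: real_addr1_gt0; rewrite ?rpredN ?normrN.
Qed.

Lemma near_c_of_approx x :
  `|x - (- (990 * 1000 + 399) / 10 ^+ 6 - (138 * 1000 + 239) / 10 ^+ 6 * 'i)| < 1 / 10 ^+ 5 ->
  `|x - c| < r0.
Proof.
have -> : (- (990 * 1000 + 399) / 10 ^+ 6 - (138 * 1000 + 239) / 10 ^+ 6 * 'i : C)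
    = gauss (- (990 * 1000 + 399)) (- (138 * 1000 + 239)) (Zpower_nat 10 6).
  rewrite gauss_oppE -of_ZX !(of_ZD, of_ZM).
  (* [%nat]: a bare numeral of type nat would be read as the unary [n%:R] in ring scope. *)
  by rewrite !(natr_of_Z 990%nat, natr_of_Z 1000%nat, natr_of_Z 399%nat, natr_of_Z 138%nat,
               natr_of_Z 239%nat, natr_of_Z 10%nat).
move=> approx; rewrite (natr_of_Z 10%nat) of_ZX -of_Z1 -/(zfrac _ _) in approx.
apply: lt_le_trans (normr_sub_gauss_lt x _ _ _ (-99) (-14) 100 _ approx isT isT) _.
by rewrite zfracD ?ler_zfrac; vm_compute.
Qed.

End Localisation.

Theorem proposition3p1 (C : numClosedFieldType) (delta : C) :
  root (map_poly (fun z : int => z%:~R) phi14) delta ->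
  `|delta - (- (990 * 1000 + 399) / 10 ^+ 6 - (138 * 1000 + 239) / 10 ^+ 6 * 'i)|
     < 1 / 10 ^+ 5 ->
  exists (F : 'M[int]_22) (sigma : 'cV[C]_22),
    [/\ lattice_aut F,
        char_poly F = ('X - 1) ^+ 8 * phi14,
        k3formC sigma sigma = 0 /\ 0 < k3formC sigma (map_mx (fun z : C => z^*) sigma)
      & map_mx (fun z : int => z%:~R) F *m sigma = delta *: sigma].
Proof.
move=> phi_delta /near_c_of_approx near_c.
have phi_zp_delta : zhorner phi14_zp delta = 0.
  by rewrite zhorner_Poly -phi14E; apply/rootP.
have delta_neq0 := near_c_neq0 _ near_c.
have delta_conj := conj_eq_inv_near_c _ phi_zp_delta near_c.
have delta2_neq1 : delta ^+ 2 != 1.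
  apply: contra (near_c_nonreal _ near_c) => /eqP delta2.
  by rewrite delta_conj -[delta^-1]mul1r -delta2 expr2 mulfK.
have [trace_lo trace_hi] := trace_near_c _ near_c.
have F_sigma := F_K3_sigma _ phi_delta.
exists F_K3, (sigma_K3 delta); split => //; [exact: F_K3_lattice_aut | exact: char_poly_F_K3 |].
split; first exact: k3formC_eigen_isotropic F_K3_lattice_aut F_sigma delta2_neq1.
by rewrite k3formC_sigma_conj // -delta_conj Rform_gt0.
Qed.
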